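(* Let $\overline{C}_n$ denote the graph complement of the cycle graph $C_n$. Then $\tau(\overline{C}_n)\to e$ as $n\to\infty$, where $e$ is Euler's number.
   Context: For a finite simple graph $G$, $K=D-A$ is its Kirchhoff matrix (degree matrix minus adjacency matrix), ${\rm Det}(K)$ its pseudo-determinant (product of non-zero eigenvalues with multiplicity), and $\tau(G)={\rm det}(1+K)/{\rm Det}(K)=\prod_{\lambda\neq0}(1+1/\lambda)$, the product running over the non-zero eigenvalues of $K$. *)

From HB Require Import structures.
From mathcomp Require Import all_boot all_order all_algebra.
From mathcomp Require Import all_classical all_reals all_analysis.
Set Implicit Arguments. Unset Strict Implicit. Unset Printing Implicit Defensive.
Import Order.TTheory GRing.Theory Num.Theory.
Local Open Scope ring_scope.

(* The cycle graph C_n on vertices 'I_n: i ~ j iff j = i+1 or i = j+1 (mod n),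
   and i <> j (simple graph).  For n >= 3 this is the usual cycle. *)
Definition cycle_adj (n : nat) : rel 'I_n :=
  fun i j => (i != j) && (((i.+1 %% n)%N == j) || ((j.+1 %% n)%N == i)).

Definition cocycle_adj (n : nat) : rel 'I_n :=
  fun i j => (i != j) && ~~ cycle_adj i j.

Definition kirchhoff (R : nzRingType) (n : nat) (e : rel 'I_n) : 'M[R]_n :=
  \matrix_(i, j) ((if i == j then (#|[pred k | e i k]|)%:R else 0)
                  - (if e i j then 1 else 0)).

(* The eigenvalues of a real square matrix, listed with (algebraic) multiplicity:
   a sequence s with char_poly A = \prod_(x <- s) ('X - x).  Such an s is unique
   up to permutation when it exists (always the case for real symmetric matrices
   such as Kirchhoff matrices); the fallback [::] is never used for them. *)
Definition spectrum (R : realType) (n : nat) (A : 'M[R]_n) : seq R :=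
  match pselect (exists s : seq R, char_poly A = \prod_(x <- s) ('X - x%:P)) with
  | left H => projT1 (cid H)
  | right _ => [::]
  end.

Definition pdet (R : realType) (n : nat) (A : 'M[R]_n) : R :=
  \prod_(l <- spectrum A | l != 0) l.

Definition tau (R : realType) (n : nat) (e : rel 'I_n) : R :=
  \det (1%:M + kirchhoff R e) / pdet (kirchhoff R e).

(* Let K be the Kirchhoff matrix of the complement of C_n and v a left
   eigenvector of K for a nonzero eigenvalue x.  The rows of K sum to 0, so the
   coordinates of v sum to 0, and at a coordinate j of maximal modulus the
   eigen-equation reads (x - deg j) v_j = sum of v_i over the at most three
   non-neighbours i of j (j included): hence n - 6 <= x <= n + 3.  The trace of
   K, at least n (n - 3), is the sum of the nonzero eigenvalues, so there are
   between n - 6 and n of them.  Since K is real symmetric its characteristic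
   polynomial splits over R, so tau is the product of 1 + 1/x over these
   eigenvalues, and exp (1/(x+1)) <= 1 + 1/x <= exp (1/x) squeezes it between
   exp (1 - 14/(n+1)) and exp (1 + 14/(n+1)) once n >= 12. *)

From HB Require Import structures.
From mathcomp Require Import all_boot all_order all_algebra.
From mathcomp Require Import all_classical all_reals all_analysis.
From mathcomp.real_closed Require Import complex.
From mathcomp Require Import ring lra.
Import Order.TTheory GRing.Theory Num.Theory.
Import numFieldNormedType.Exports.
Local Open Scope classical_set_scope.
Local Open Scope ring_scope.

Set Implicit Arguments. Unset Strict Implicit. Unset Printing Implicit Defensive.

Lemma horner_char_poly (R : comNzRingType) n (A : 'M[R]_n) a :
  (char_poly A).[a] = \det (a%:M - A).
Proof.
rewrite /char_poly -horner_evalE -det_map_mx; congr (\det _).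
by apply/matrixP => i j; rewrite !mxE /= horner_evalE !hornerE hornerMn hornerX.
Qed.

Lemma char_poly_conj (F : fieldType) n (P A : 'M[F]_n) : P \in unitmx ->
  char_poly (invmx P *m A *m P) = char_poly A.
Proof.
move=> Pu; rewrite /char_poly /char_poly_mx.
have PV : map_mx polyC (invmx P) *m map_mx polyC P = 1%:M.
  by rewrite -map_mxM mulVmx // map_mx1.
have -> : 'X%:M - map_mx polyC (invmx P *m A *m P) =
    map_mx polyC (invmx P) *m ('X%:M - map_mx polyC A) *m map_mx polyC P.
  rewrite mulmxBr mulmxBl !map_mxM -!mulmxA mul_scalar_mx -scalemxAr.
  by rewrite -mul_mx_scalar !mulmxA PV mul1mx.
by rewrite !det_mulmx mulrAC -det_mulmx PV det1 mul1r.
Qed.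

Section SplitCharPoly.
Variables (R : comNzRingType) (n : nat) (A : 'M[R]_n) (s : seq R).
Hypothesis A_split : char_poly A = \prod_(x <- s) ('X - x%:P).

Lemma size_split_char_poly : size s = n.
Proof. by have := size_char_poly A; rewrite A_split size_prod_XsubC => -[]. Qed.

Lemma det1D_split_char_poly : \det (1%:M + A) = \prod_(x <- s) (1 + x).
Proof.
have := horner_char_poly A (-1).
have -> : (-1)%:M - A = (-1) *: (1%:M + A).
  by rewrite scalerDr scale_scalar_mx mulr1 scaleN1r.
rewrite detZ A_split horner_prod.
under eq_bigr => x _ do rewrite hornerXsubC -opprD -mulN1r.
rewrite big_split /= big_const_seq count_predT size_split_char_poly iter_mulr_1.
by move=> /(congr1 ( *%R ((-1) ^+ n))); rewrite !mulrA -expr2 sqrr_sign !mul1r.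
Qed.

Lemma trace_split_char_poly : \tr A = \sum_(x <- s) x.
Proof.
case: n A s A_split size_split_char_poly => [|m] B t B_split size_t.
  by rewrite (size0nil size_t) big_nil /mxtrace big_ord0.
have := coefPn_prod_XsubC (ps := t).
by rewrite size_t -B_split char_poly_trace // => /(_ isT)/oppr_inj.
Qed.
End SplitCharPoly.

Section SymmetricSpectrum.
Local Open Scope complex_scope.

Lemma sym_char_poly_split (R : rcfType) n (A : 'M[R]_n) : A^T = A ->
  exists s : seq R, char_poly A = \prod_(x <- s) ('X - x%:P).
Proof.
move=> A_sym; pose f := real_complex R; pose AC := map_mx f A.
have AC_herm : AC \is hermsymmx.
  apply: realsym_hermsym.
    by apply/is_hermitianmxP; rewrite expr0 scale1r map_mx_id // /AC map_trmx A_sym.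
  by apply/mxOverP => i j; rewrite mxE /= realE ler0c lecR -realE num_real.
have /orthomx_spectralP AC_diag := hermitian_normalmx AC_herm.
have d_real := hermitian_spectral_diag_real AC_herm.
set P := spectralmx AC in AC_diag; set d := spectral_diag AC in AC_diag d_real.
exists [seq complex.Re (d 0 i) | i <- enum 'I_n].
apply: (@map_poly_inj _ _ f).
rewrite map_char_poly -/AC AC_diag char_poly_conj ?spectral_unit //.
rewrite char_poly_trig ?diag_mx_is_trig // rmorph_prod big_map big_enum /=.
apply: eq_bigr => i _; rewrite map_polyXsubC /= !mxE eqxx mulr1n.
have := mxOverP d_real 0 i; move: (d 0 i) => [a b].
by rewrite realE !lecE /= => /orP[] /andP[/eqP b0 _]; [rewrite b0 | rewrite -b0].
Qed.

End SymmetricSpectrum.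

Section Spectrum.
Variables (R : realType) (n : nat) (A : 'M[R]_n).
Hypothesis A_sym : A^T = A.

Lemma spectrumP : char_poly A = \prod_(x <- spectrum A) ('X - x%:P).
Proof.
rewrite /spectrum; case: pselect => [split_A|]; first by case: cid.
by have := sym_char_poly_split A_sym.
Qed.

Lemma eigenvalue_spectrum x : x \in spectrum A -> eigenvalue A x.
Proof. by rewrite eigenvalue_root_char spectrumP root_prod_XsubC. Qed.

Lemma det1D_div_pdet :
  \det (1%:M + A) / pdet A = \prod_(x <- spectrum A | x != 0) (1 + x^-1).
Proof.
rewrite /pdet (det1D_split_char_poly spectrumP) (bigID (fun x => x != 0)) /=.
have -> : \prod_(x <- spectrum A | ~~ (x != 0)) (1 + x) = 1.
  by apply: big1 => x /negPn/eqP->; rewrite addr0.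
rewrite mulr1 -prodf_div; apply: eq_bigr => x x0.
by rewrite mulrDl mulfV // mul1r addrC.
Qed.

End Spectrum.

Section Kirchhoff.
Variables (R : nzRingType) (n : nat) (e : rel 'I_n).

Lemma kirchhoff_row_sum i : \sum_j kirchhoff R e i j = 0.
Proof.
under eq_bigr => j _ do rewrite mxE.
rewrite sumrB -!big_mkcond /= (big_pred1 i) => [|j]; last by rewrite eq_sym.
rewrite sumr_const; apply/eqP; rewrite subr_eq0; apply/eqP.
by congr _%:R; apply: eq_card.
Qed.

Lemma row_mul_kirchhoff (v : 'rV[R]_n) j :
  (v *m kirchhoff R e) 0 j =
    v 0 j * #|[pred k | e j k]|%:R - \sum_(i | e i j) v 0 i.
Proof.
rewrite mxE; under eq_bigr => i _ do rewrite mxE mulrBr.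
rewrite sumrB (bigD1 j) //= eqxx big1 ?addr0 => [|i /negPf->]; last by rewrite mulr0.
rewrite [in RHS]big_mkcond; congr (_ - _).
by apply: eq_bigr => i _; case: ifP; rewrite ?mulr1 ?mulr0.
Qed.

Lemma mxtrace_kirchhoff : irreflexive e ->
  \tr (kirchhoff R e) = \sum_i (#|[pred k | e i k]|)%:R.
Proof. by move=> e_irr; apply: eq_bigr => i _; rewrite mxE eqxx e_irr subr0. Qed.

End Kirchhoff.

Lemma kirchhoff_eigenvalue_near_degree (R : realFieldType) n (e : rel 'I_n) x :
  eigenvalue (kirchhoff R e) x -> x != 0 ->
  exists j, `|x - (#|[pred k | e j k]|)%:R| <= (#|[pred i | ~~ e i j]|)%:R.
Proof.
set K := kirchhoff R e => /eigenvalueP [v vK v_neq0] x_neq0.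
have sum_v : \sum_i v 0 i = 0.
  have vK_sum : \sum_j (v *m K) 0 j = 0.
    under eq_bigr do rewrite mxE.
    by rewrite exchange_big big1 // => i _; rewrite -mulr_sumr kirchhoff_row_sum mulr0.
  move: vK_sum; rewrite vK; under eq_bigr do rewrite mxE.
  by rewrite -mulr_sumr => /eqP; rewrite mulf_eq0 (negPf x_neq0) => /eqP.
have [k vk_neq0] : exists k, v 0 k != 0.
  apply/existsP; apply: contraR v_neq0 => /existsPn v0.
  by apply/eqP/rowP => k; rewrite mxE; apply/eqP; rewrite -[_ == _]negbK v0.
pose j := [arg max_(i > k) `|v 0 i|]%O.
have vj_max i : `|v 0 i| <= `|v 0 j|.
  by rewrite /j; case: arg_maxP => // j' _; apply.
have vj_gt0 : 0 < `|v 0 j| by apply: lt_le_trans (vj_max k); rewrite normr_gt0.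
exists j; set d := (#|[pred k | e j k]|)%:R.
have vKj : x * v 0 j = d * v 0 j + \sum_(i | ~~ e i j) v 0 i.
  have := congr1 (fun w : 'rV_n => w 0 j) vK; rewrite /= row_mul_kirchhoff mxE => <-.
  move: sum_v; rewrite (bigID (fun i => e i j)) /= => /eqP; rewrite addr_eq0 => /eqP->.
  by rewrite opprK mulrC.
have : `|x - d| * `|v 0 j| <= (#|[pred i | ~~ e i j]|)%:R * `|v 0 j|.
  rewrite -normrM mulrBl vKj addrAC subrr add0r.
  apply: le_trans (ler_norm_sum _ _ _) _.
  apply: le_trans (ler_sum _ (fun i _ => vj_max i)) _.
  by rewrite sumr_const mulr_natl.
by rewrite ler_pM2r.
Qed.

Section CocycleGraph.
Variable n : nat.
Implicit Types i j k : 'I_n.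

Lemma cocycle_adj_irrefl : irreflexive (@cocycle_adj n).
Proof. by move=> i; rewrite /cocycle_adj eqxx. Qed.

Lemma cocycle_adj_sym : symmetric (@cocycle_adj n).
Proof. by move=> i j; rewrite /cocycle_adj /cycle_adj eq_sym orbC. Qed.

Lemma card_not_cocycle_adj j : (#|[pred k | ~~ cocycle_adj j k]| <= 3)%N.
Proof.
apply: leq_trans (card_size [:: j; ordS j; ord_pred j]).
apply/subset_leq_card/fintype.subsetP => k; rewrite !inE /cocycle_adj /cycle_adj.
case: (eqVneq j k) => [->|_]; rewrite ?eqxx //= negbK => /orP[/eqP Sj | /eqP Sk].
  by rewrite (_ : k = ordS j) ?eqxx ?orbT //; apply: val_inj.
by rewrite (_ : j = ordS k) ?ordSK ?eqxx ?orbT //; apply: val_inj.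
Qed.

Lemma cocycle_degree_bounds j :
  (n <= #|[pred k | cocycle_adj j k]| + 3)%N /\
  (#|[pred k | cocycle_adj j k]| <= n)%N.
Proof.
split; last by rewrite -[X in (_ <= X)%N]card_ord max_card.
rewrite -[X in (X <= _)%N]card_ord -(cardC [pred k | cocycle_adj j k]) leq_add2l.
exact: card_not_cocycle_adj.
Qed.

End CocycleGraph.

Section CocycleSpectrum.
Variables (R : realFieldType) (n : nat).
Local Notation K := (kirchhoff R (@cocycle_adj n)).

Lemma kirchhoff_cocycle_sym : K^T = K.
Proof.
by apply/matrixP => i j; rewrite !mxE cocycle_adj_sym eq_sym; case: eqP => [->|].
Qed.

Lemma kirchhoff_cocycle_eigenvalue x : eigenvalue K x -> x != 0 ->
  n%:R - 6 <= x <= n%:R + 3.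
Proof.
move=> /kirchhoff_eigenvalue_near_degree /[apply] -[j].
have [lo hi] := cocycle_degree_bounds j.
have : (#|[pred i | ~~ cocycle_adj i j]| <= 3)%N.
  rewrite (eq_card (fun i => congr1 negb (cocycle_adj_sym i j))).
  exact: card_not_cocycle_adj.
move: lo hi; rewrite -!(ler_nat R) natrD.
set d := _%:R; set c := _%:R => lo hi c3; rewrite ler_norml => /andP[].
lra.
Qed.

Lemma mxtrace_kirchhoff_cocycle : n%:R * (n%:R - 3) <= \tr K.
Proof.
rewrite mxtrace_kirchhoff; last exact: cocycle_adj_irrefl.
have -> : n%:R * (n%:R - 3) = \sum_(j < n) (n%:R - 3 : R).
  by rewrite sumr_const card_ord mulr_natl.
apply: ler_sum => j _.
have [lo _] := cocycle_degree_bounds j.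
by rewrite lerBlDr -natrD ler_nat.
Qed.

End CocycleSpectrum.

Lemma prod_seq_count_bounds (R : realDomainType) (I : eqType) (s : seq I)
    (P : pred I) (F : I -> R) (a b : R) :
  0 <= a -> {in s, forall i, P i -> a <= F i <= b} ->
  a ^+ count P s <= \prod_(i <- s | P i) F i <= b ^+ count P s.
Proof.
move=> a_ge0 Fab; rewrite -!iter_mulr_1 -!(big_const_seq 1 *%R).
apply/andP; split; rewrite [X in X <= _]big_seq_cond [X in _ <= X]big_seq_cond.
all: apply: ler_prod => i /andP[si Pi]; have /andP[aF Fb] := Fab i si Pi.
  by rewrite a_ge0.
by rewrite (le_trans a_ge0 aF).
Qed.

Lemma expR_inv_addr1_le (R : realType) (x : R) :
  0 < x -> expR (x + 1)^-1 <= 1 + x^-1.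
Proof.
move=> x_gt0.
have -> : 1 + x^-1 = (1 - (x + 1)^-1)^-1 by field; lra.
rewrite -[X in expR X]opprK expRN lef_pV2 ?posrE ?expR_gt0 ?expR_ge1Dx //.
by rewrite subr_gt0 invf_lt1; lra.
Qed.

Lemma cvg_expR_1D (R : realType) (c : R) :
  (fun n : nat => expR (1 + c / n.+1%:R)) @ \oo --> expR 1.
Proof.
apply: (continuous_cvg _ (@continuous_expR R 1)).
rewrite -[X in _ --> X]addr0 -(mulr0 c).
exact: cvgD (cvg_cst _) (cvgM (cvg_cst _) cvg_harmonic).
Qed.

Section CocycleTau.
Variables (R : realType) (n : nat).
Local Notation K := (kirchhoff R (@cocycle_adj n)).
Local Notation m := (count (fun x => x != 0) (spectrum K)).

Lemma spectrum_kirchhoff_cocycle x : x \in spectrum K -> x != 0 ->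
  n%:R - 6 <= x <= n%:R + 3.
Proof.
move/(eigenvalue_spectrum (kirchhoff_cocycle_sym R n)).
exact: kirchhoff_cocycle_eigenvalue.
Qed.

Lemma count_spectrum_kirchhoff_cocycle : n%:R - 6 <= m%:R :> R /\ (m <= n)%N.
Proof.
have K_split := spectrumP (kirchhoff_cocycle_sym R n).
split; last by rewrite -[X in (_ <= X)%N](size_split_char_poly K_split) count_size.
have trace_le : n%:R * (n%:R - 3) <= (n%:R + 3) * m%:R :> R.
  apply: le_trans (mxtrace_kirchhoff_cocycle R n) _.
  rewrite (trace_split_char_poly K_split) (bigID (fun x => x != 0)) /=.
  rewrite [X in _ + X]big1 => [|x /negPn/eqP //]; rewrite addr0 mulr_natr.
  rewrite -iter_addr_0 -big_const_seq.
  rewrite [X in X <= _]big_seq_cond [X in _ <= X]big_seq_cond.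
  apply: ler_sum => x /andP[xs x0].
  by have /andP[] := spectrum_kirchhoff_cocycle xs x0.
rewrite -(ler_pM2l (_ : 0 < n%:R + 3)) ?(le_trans _ trace_le) //; nra.
Qed.

Lemma tau_cocycle_bounds : (12 <= n)%N ->
  expR (1 - 14 / n.+1%:R) <= tau R (@cocycle_adj n) <= expR (1 + 14 / n.+1%:R).
Proof.
move=> n_ge12; have n_ge : 12 <= n%:R :> R by rewrite (ler_nat R 12).
have factor_bounds : {in spectrum K, forall x, x != 0 ->
    expR (n%:R + 4)^-1 <= 1 + x^-1 <= expR (n%:R - 6)^-1}.
  move=> x xs x0; have /andP[x_ge x_le] := spectrum_kirchhoff_cocycle xs x0.
  have x_gt0 : 0 < x by lra.
  apply/andP; split.
    apply: le_trans (expR_inv_addr1_le x_gt0); rewrite ler_expR lef_pV2 ?posrE; lra.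
  apply: le_trans (expR_ge1Dx _) _; rewrite ler_expR lef_pV2 ?posrE; lra.
have /andP[lo hi] := prod_seq_count_bounds (expR_ge0 _) factor_bounds.
rewrite -!expRM_natl in lo hi.
have [m_ge] := count_spectrum_kirchhoff_cocycle; rewrite -(ler_nat R) => m_le.
have t_def : n.+1%:R^-1 * (n%:R + 1) = 1 :> R by rewrite natr1 mulVf.
have t_gt0 : 0 < n.+1%:R^-1 :> R by rewrite invr_gt0 ltr0n.
move: t_def t_gt0; set t := n.+1%:R^-1 => t_def t_gt0.
rewrite /tau det1D_div_pdet ?kirchhoff_cocycle_sym //.
apply/andP; split; [apply: le_trans lo | apply: le_trans hi _]; rewrite ler_expR.
  by rewrite ler_pdivlMr; nra.
by rewrite ler_pdivrMr; nra.
Qed.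

End CocycleTau.

Theorem mainTheorem2 (R : realType) :
  (fun n : nat => tau R (@cocycle_adj n)) @ \oo --> expR (1 : R).
Proof.
apply: (squeeze_cvgr _ (cvg_expR_1D (-14)) (cvg_expR_1D 14)).
by apply: filterS (nbhs_infty_ge 12) => n n_ge; rewrite mulNr tau_cocycle_bounds.
Qed.
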